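(* Let $U\subset\mathbb{R}^s$ be open, $X:U\to\mathbb{R}^{n+1}_1$ a spacelike embedding, $M=X(U)$, and $n^T$ a smooth future directed unit timelike normal field. Let $d\mathfrak{v}_{N_1(M)[n^T]}$ be the Riemannian volume element of $N_1(M)[n^T]$ and $d\mathfrak{v}_{\mathbb{S}^{n-1}_+}$ that of $\mathbb{S}^{n-1}_+$. Then at every $(p,\xi)\in N_1(M)[n^T]$, $$\big(\widetilde{\mathbb{LG}}(n^T)^*d\mathfrak{v}_{\mathbb{S}^{n-1}_+}\big)_{(p,\xi)}=|\widetilde K_\ell(n^T)(p,\xi)|\,d\mathfrak{v}_{N_1(M)[n^T](p,\xi)}.$$
   Context: $\mathbb{R}^{n+1}_1$ is $\mathbb{R}^{n+1}$ with $\langle x,y\rangle=-x_0y_0+\sum_{i=1}^n x_iy_i$; spacelike embedding means tangent spaces consist of vectors with $\langle v,v\rangle>0$. $\mathbb{S}^{n-1}_+=\{x:\langle x,x\rangle=0,x_0=1\}$ with the (positive definite) metric induced by $\langle\,,\rangle$; for nonzero lightlike $x$, $\widetilde x=x/x_0$. $N_p(M)$ is the pseudo-orthogonal complement of $T_pM$; $n^T(u)\in N_{X(u)}(M)$, $\langle n^T,n^T\rangle=-1$, $n^T_0>0$. $N_1(M)_p[n^T]=\{\xi\in N_p(M):\langle\xi,\xi\rangle=1,\langle\xi,n^T(p)\rangle=0\}$, $N_1(M)[n^T]=\bigcup_pN_1(M)_p[n^T]$. Its tangent space at $(p,\xi)$ is identified with $T_pM\oplus\{\eta\in N_p(M):\langle\eta,\xi\rangle=\langle\eta,n^T(p)\rangle=0\}\subset\mathbb{R}^{n+1}_1$,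 and it carries the Riemannian metric induced by $\langle\,,\rangle$. $\mathbb{R}^{n+1}_1=T_{(p,\xi)}N_1(M)[n^T]\oplus\mathrm{span}\{n^T(p),\xi\}$ and $\Pi^\tau$ denotes projection to the first summand. $\widetilde{\mathbb{LG}}(n^T)(p,\xi)=\widetilde{n^T(p)+\xi}$ and $\widetilde K_\ell(n^T)(p,\xi)=\det\big(-\Pi^\tau\circ d_{(p,\xi)}\widetilde{\mathbb{LG}}(n^T)\big)$. *)

From HB Require Import structures.
From mathcomp Require Import all_boot all_order all_algebra.
From mathcomp Require Import all_classical all_reals all_analysis.
Set Implicit Arguments. Unset Strict Implicit. Unset Printing Implicit Defensive.
Import Order.TTheory GRing.Theory Num.Theory.
Import numFieldNormedType.Exports.
Local Open Scope classical_set_scope.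
Local Open Scope ring_scope.

Section Defs.
Variable R : realType.

(* Lorentz-Minkowski pseudo scalar product on R^{n+1}_1 ; coordinate 0 is x_0 *)
Definition lprod (n : nat) (x y : 'rV[R]_n.+1) : R :=
  \sum_(i < n.+1) (if i == ord0 then -1 else 1) * x ord0 i * y ord0 i.

Definition tildev (n : nat) (x : 'rV[R]_n.+1) : 'rV[R]_n.+1 := (x ord0 ord0)^-1 *: x.

Fixpoint itD (s m : nat) (vs : seq 'rV[R]_s) (f : 'rV[R]_s -> 'rV[R]_m)
  : 'rV[R]_s -> 'rV[R]_m :=
  match vs with
  | [::] => f
  | v :: vs' => fun x => 'D_v (itD vs' f) x
  end.

(* C^infinity on the open set U: all iterated directional derivatives
   exist and are (Frechet) differentiable at every point of U *)
Definition smooth_on (s m : nat) (U : set 'rV[R]_s) (f : 'rV[R]_s -> 'rV[R]_m) :=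
  forall (vs : seq 'rV[R]_s) (x : 'rV[R]_s), U x -> differentiable (itD vs f) x.

Definition spacelike_embedding (s n : nat) (U : set 'rV[R]_s)
  (X : 'rV[R]_s -> 'rV[R]_n.+1) :=
  [/\ smooth_on U X,
      (forall u v, U u -> 'D_v X u = 0 -> v = 0),
      (forall u v, U u -> v != 0 -> 0 < lprod ('D_v X u) ('D_v X u)),
      (forall u1 u2, U u1 -> U u2 -> X u1 = X u2 -> u1 = u2)
    & (forall u, U u -> forall e : R, 0 < e -> exists2 d : R, 0 < d &
         forall u', U u' -> `|X u' - X u| < d -> `|u' - u| < e)     (* homeo onto image *)
  ].

(* x in N_{X(u)}(M) : pseudo-orthogonal to T_{X(u)}M = image of dX_u *)
Definition in_normal (s n : nat) (X : 'rV[R]_s -> 'rV[R]_n.+1) (u : 'rV[R]_s)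
  (x : 'rV[R]_n.+1) := forall v : 'rV[R]_s, lprod x ('D_v X u) = 0.

Definition future_unit_timelike_normal (s n : nat) (U : set 'rV[R]_s)
  (X : 'rV[R]_s -> 'rV[R]_n.+1) (nT : 'rV[R]_s -> 'rV[R]_n.+1) :=
  [/\ smooth_on U nT,
      (forall u, U u -> in_normal X u (nT u)),
      (forall u, U u -> lprod (nT u) (nT u) = -1)
    & (forall u, U u -> 0 < nT u ord0 ord0)].

Definition inN1 (s n : nat) (X nT : 'rV[R]_s -> 'rV[R]_n.+1) (u : 'rV[R]_s)
  (xi : 'rV[R]_n.+1) :=
  [/\ in_normal X u xi, lprod xi xi = 1 & lprod xi (nT u) = 0].

Definition inW (s n : nat) (X nT : 'rV[R]_s -> 'rV[R]_n.+1) (u : 'rV[R]_s)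
  (xi eta : 'rV[R]_n.+1) :=
  [/\ in_normal X u eta, lprod eta xi = 0 & lprod eta (nT u) = 0].

(* tanrel U X nT u xi w L : w is a tangent vector of N_1(M)[n^T] at (X u, xi),
   written (via the identification T = T_pM (+) W) as an element of R^{n+1}_1,
   and L = d_{(p,xi)} LG~(n^T) (w).  The tangent vector is the velocity of a
   curve t |-> (X(a t), z t) in N_1(M)[n^T] through (X u, xi); its T_pM part is
   d/dt X(a t), its second part eta is the component of z'(0) in W
   (w.r.t. R^{n+1} = T_pM (+) span{n^T,xi} (+) W). *)
Definition tanrel (s n : nat) (U : set 'rV[R]_s) (X nT : 'rV[R]_s -> 'rV[R]_n.+1)
  (u : 'rV[R]_s) (xi w L : 'rV[R]_n.+1) :=
  exists (a : R -> 'rV[R]_s) (z : R -> 'rV[R]_n.+1) (eta : 'rV[R]_n.+1),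
  [/\ a 0 = u, z 0 = xi,
      (\forall t \near (0 : R), U (a t) /\ inN1 X nT (a t) (z t)),
      derivable a 0 1 & derivable z 0 1] /\
  [/\ inW X nT u xi eta,
      (exists (e : 'rV[R]_s) (al be : R),
          'D_1 z 0 - eta = 'D_e X u + al *: nT u + be *: xi),
      w = 'D_1 (X \o a) 0 + eta
    & L = 'D_1 (fun t => tildev (nT (a t) + z t)) 0].

(* Pi^tau : projection of R^{n+1}_1 = T (+) span{n^T(p), xi} onto T
   (n^T, xi orthonormal with <n^T,n^T> = -1, <xi,xi> = 1, both orthogonal to T) *)
Definition Pitau (n : nat) (nTu xi y : 'rV[R]_n.+1) : 'rV[R]_n.+1 :=
  y + lprod y nTu *: nTu - lprod y xi *: xi.

Definition gram (n k : nat) (w : 'I_k -> 'rV[R]_n.+1) : 'M[R]_k :=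
  \matrix_(i, j) lprod (w i) (w j).

(* K~_l(n^T)(p,xi) = det(-Pi^tau o dLG~), computed in a basis b of T_{(p,xi)}N_1 *)
Definition Kl (s n : nat) (U : set 'rV[R]_s) (X nT : 'rV[R]_s -> 'rV[R]_n.+1)
  (u : 'rV[R]_s) (xi : 'rV[R]_n.+1) : R :=
  xget 0 [set k : R | exists (b Lb : 'I_n.-1 -> 'rV[R]_n.+1) (A : 'M[R]_n.-1),
     [/\ (forall i, tanrel U X nT u xi (b i) (Lb i)),
         (forall c : 'I_n.-1 -> R, \sum_i c i *: b i = 0 -> forall i, c i = 0),
         (forall w L, tanrel U X nT u xi w L ->
              exists c : 'I_n.-1 -> R, w = \sum_i c i *: b i),
         (forall i, - Pitau (nT u) xi (Lb i) = \sum_j A i j *: b j)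
       & k = \det A]].

End Defs.

(* A tangent vector of N_1(M)[n^T] at (p, xi) is w = dX(v) + eta with eta in N_p(M)
   orthogonal to n^T(p) and xi.  Differentiating the defining constraints along a
   curve shows that dLG~(w) is congruent to c (dn^T(v) + dX(e) + eta) modulo
   span{n^T(p), xi}, where c = 1 / (n^T(p) + xi)_0 and dX(e) is determined by v
   through the Weingarten equation.  Hence Pi^tau o dLG~ is a well-defined linear
   map, and dLG~ takes values in (n^T(p) + xi)^perp, where Pi^tau is an isometry
   because n^T(p) + xi is lightlike.  In a basis b with w = C b and
   -Pi^tau dLG~(b) = A b this gives Gram(dLG~ w) = C A Gram(b) (C A)^T and
   Gram(w) = C Gram(b) C^T, so the determinants differ by the factor (det A)^2. *)

From HB Require Import structures.
From mathcomp Require Import all_boot all_order all_algebra.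
From mathcomp Require Import all_classical all_reals all_analysis.
From mathcomp Require Import ring lra.
Set Implicit Arguments. Unset Strict Implicit. Unset Printing Implicit Defensive.
Import Order.TTheory GRing.Theory Num.Theory.
Import numFieldNormedType.Exports.
Local Open Scope classical_set_scope.
Local Open Scope ring_scope.

Section LorentzProduct.
Variables (R : realType) (n : nat).
Implicit Types (x y z : 'rV[R]_n.+1) (a : R).

Lemma lprodC x y : lprod x y = lprod y x.
Proof. by rewrite /lprod; apply: eq_bigr => i _; ring. Qed.

Lemma lprodDl x y z : lprod (x + y) z = lprod x z + lprod y z.
Proof. by rewrite /lprod -big_split /=; apply: eq_bigr => i _; rewrite !mxE; ring. Qed.

Lemma lprodZl a x y : lprod (a *: x) y = a * lprod x y.
Proof. by rewrite /lprod mulr_sumr; apply: eq_bigr => i _; rewrite !mxE; ring. Qed.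

Lemma lprod0l y : lprod 0 y = 0.
Proof. by rewrite -(scale0r 0) lprodZl mul0r. Qed.

Lemma lprodNl x y : lprod (- x) y = - lprod x y.
Proof. by rewrite -scaleN1r lprodZl mulN1r. Qed.

Lemma lprodBl x y z : lprod (x - y) z = lprod x z - lprod y z.
Proof. by rewrite lprodDl lprodNl. Qed.

Lemma lprodDr x y z : lprod x (y + z) = lprod x y + lprod x z.
Proof. by rewrite lprodC lprodDl !(lprodC x). Qed.

Lemma lprodZr a x y : lprod x (a *: y) = a * lprod x y.
Proof. by rewrite lprodC lprodZl lprodC. Qed.

Lemma lprodNr x y : lprod x (- y) = - lprod x y.
Proof. by rewrite lprodC lprodNl lprodC. Qed.

Lemma lprod_suml m (c : 'I_m -> R) (v : 'I_m -> 'rV[R]_n.+1) y :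
  lprod (\sum_k c k *: v k) y = \sum_k c k * lprod (v k) y.
Proof.
elim/big_rec2: _ => [|k a b _ IH]; first exact: lprod0l.
by rewrite lprodDl lprodZl IH.
Qed.

Lemma lprod_sumr m (c : 'I_m -> R) (v : 'I_m -> 'rV[R]_n.+1) y :
  lprod y (\sum_k c k *: v k) = \sum_k c k * lprod y (v k).
Proof. by rewrite lprodC lprod_suml; apply: eq_bigr => k _; rewrite lprodC. Qed.

Lemma lightlike_time_neq0 y : lprod y y = 0 -> y != 0 -> y 0 0 != 0.
Proof.
move=> yy0; apply: contraNN => /eqP y00; apply/eqP/rowP => i; rewrite mxE.
have sq_ge0 (j : 'I_n.+1) : true -> 0 <= (if j == ord0 then -1 else 1) * y 0 j * y 0 j.
  by case: eqP => [->|_] _; rewrite ?y00 ?mulr0 // mul1r -expr2 sqr_ge0.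
have := psumr_eq0P sq_ge0 yy0 (i := i) isT.
case: (eqVneq i ord0) => [->|_]; first by rewrite y00.
by rewrite mul1r => /eqP; rewrite mulf_eq0 orbb => /eqP.
Qed.

Fact Pitau_is_linear x y : linear (Pitau x y).
Proof. by move=> a z z'; apply/rowP => j; rewrite /Pitau !lprodDl !lprodZl !mxE; ring. Qed.

HB.instance Definition _ x y :=
  GRing.isLinear.Build R _ _ *:%R (Pitau x y) (Pitau_is_linear x y).

Lemma PitauD p q x y : Pitau p q (x + y) = Pitau p q x + Pitau p q y.
Proof. exact: linearD. Qed.

Lemma PitauZ p q a x : Pitau p q (a *: x) = a *: Pitau p q x.
Proof. exact: linearZ. Qed.

Lemma Pitau_sum p q m (c : 'I_m -> R) (v : 'I_m -> 'rV[R]_n.+1) :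
  Pitau p q (\sum_k c k *: v k) = \sum_k c k *: Pitau p q (v k).
Proof. by rewrite linear_sum; apply: eq_bigr => k _; rewrite linearZ. Qed.

Lemma Pitau_id p q x : lprod x p = 0 -> lprod x q = 0 -> Pitau p q x = x.
Proof. by move=> xp xq; rewrite /Pitau xp xq !scale0r addr0 subr0. Qed.

Section LorentzFrame.
Variables p q : 'rV[R]_n.+1.
Hypotheses (pp : lprod p p = -1) (qq : lprod q q = 1) (pq : lprod p q = 0).

Lemma Pitau_frame1 : Pitau p q p = 0.
Proof. by rewrite /Pitau pp pq scale0r subr0 scaleN1r subrr. Qed.

Lemma Pitau_frame2 : Pitau p q q = 0.
Proof. by rewrite /Pitau qq lprodC pq scale0r addr0 scale1r subrr. Qed.

Lemma Pitau_frame_orth x : lprod (Pitau p q x) p = 0 /\ lprod (Pitau p q x) q = 0.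
Proof.
by rewrite /Pitau !lprodBl !lprodDl !lprodZl pp qq pq (lprodC q p) pq; split; ring.
Qed.

(* On (p + q)^perp, Pitau adds a multiple of the lightlike vector p + q, which
   is orthogonal to that space. *)
Lemma Pitau_isometry x y : lprod x (p + q) = 0 -> lprod y (p + q) = 0 ->
  lprod (Pitau p q x) (Pitau p q y) = lprod x y.
Proof.
rewrite !lprodDr => xpq ypq; rewrite /Pitau.
rewrite !(lprodDl, lprodDr, lprodNl, lprodNr, lprodZl, lprodZr).
rewrite pp qq pq (lprodC q p) pq !(lprodC p) !(lprodC q); nra.
Qed.

Lemma Pitau_frame_comb x t (a b c k : R) : lprod t p = 0 -> lprod t q = 0 ->
  Pitau p q (c *: (x + (t + a *: p + b *: q)) + k *: (p + q)) = c *: (Pitau p q x + t).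
Proof.
move=> tp tq; rewrite !(PitauD, PitauZ) Pitau_frame1 Pitau_frame2.
by rewrite (Pitau_id tp tq) !(scaler0, addr0).
Qed.

End LorentzFrame.
End LorentzProduct.

Section GramMatrix.
Variables (R : realType) (n : nat).

Lemma gram_lincomb k m (M : 'M[R]_(k, m)) (b : 'I_m -> 'rV[R]_n.+1)
    (x : 'I_k -> 'rV[R]_n.+1) :
  (forall i, x i = \sum_j M i j *: b j) -> gram x = M *m gram b *m M^T.
Proof.
move=> xE; apply/matrixP => i j; rewrite !mxE xE lprod_suml.
under [RHS]eq_bigr => l _ do rewrite mxE mulr_suml.
rewrite exchange_big /=; apply: eq_bigr => l _.
rewrite xE lprod_sumr mulr_sumr; apply: eq_bigr => l' _.
by rewrite !mxE; ring.
Qed.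

Lemma gramN m (x : 'I_m -> 'rV[R]_n.+1) : gram (fun i => - x i) = gram x.
Proof. by apply/matrixP => i j; rewrite !mxE lprodNl lprodNr opprK. Qed.

Lemma det_gram_eq0 m (x : 'I_m -> 'rV[R]_n.+1) (c : 'I_m -> R) i0 :
  c i0 != 0 -> \sum_i c i *: x i = 0 -> \det (gram x) = 0.
Proof.
move=> ci0 cx0; apply/eqP/det0P; exists (\row_i c i).
  by apply/eqP => /rowP /(_ i0); rewrite !mxE; apply/eqP.
apply/rowP => j; rewrite !mxE -[RHS](lprod0l (x j)) -cx0 lprod_suml.
by apply: eq_bigr => i _; rewrite !mxE.
Qed.

End GramMatrix.

Lemma left_kernel_nontrivial (R : fieldType) k m (A : 'M[R]_(k, m)) :
  (m < k)%N -> exists2 v : 'rV[R]_k, v != 0 & v *m A = 0.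
Proof.
move=> mk; exists (nz_row (kermx A)); last exact/sub_kermxP/nz_row_sub.
rewrite nz_row_eq0 -mxrank_eq0 mxrank_ker subn_eq0 -ltnNge.
exact: leq_ltn_trans (rank_leq_col _) mk.
Qed.

Lemma mulmx_row_sum (R : pzRingType) k m (a : 'rV[R]_k) (w : 'I_k -> 'rV[R]_m) :
  a *m \matrix_i w i = \sum_i a 0 i *: w i.
Proof. by rewrite mulmx_sum_row; apply: eq_bigr => i _; rewrite rowK. Qed.

Lemma mul_mx11 (R : comPzRingType) m (b : 'rV[R]_1) (y : 'rV[R]_m) : b *m y = b 0 0 *: y.
Proof. by rewrite {1}[b]mx11_scalar mul_scalar_mx. Qed.

Definition lin_indep (R : pzRingType) m k (w : 'I_m -> 'rV[R]_k) :=
  forall c : 'I_m -> R, \sum_i c i *: w i = 0 -> forall i, c i = 0.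

Lemma frame_orth_span (R : realType) n (p q : 'rV[R]_n.+1)
    (w : 'I_n.-1 -> 'rV[R]_n.+1) (y : 'rV[R]_n.+1) :
  lprod p p = -1 -> lprod q q = 1 -> lprod p q = 0 ->
  (forall i, lprod (w i) p = 0 /\ lprod (w i) q = 0) ->
  lin_indep w -> lprod y p = 0 -> lprod y q = 0 ->
  exists c : 'I_n.-1 -> R, y = \sum_i c i *: w i.
Proof.
case: n p q w y => [|m] p q w y pp qq pq wpq w_indep yp yq.
  (* n = 0: R^1_1 has no spacelike unit vector. *)
  by move: qq; rewrite /lprod big_ord1 eqxx; have := sqr_ge0 (q 0 0); rewrite expr2; lra.
(* The n + 2 vectors w, y, p, q of R^{n+1} are dependent; pairing a dependence
   with p and with q kills the coefficients of p and q. *)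
pose A := col_mx (\matrix_i w i) (col_mx y (col_mx p q)).
have [v v0 vA0] : exists2 v : 'rV[R]_(m + (1 + (1 + 1))), v != 0 & v *m A = 0.
  by apply: left_kernel_nontrivial; rewrite -addn2 ltn_add2l.
rewrite -[v]hsubmxK -[rsubmx v]hsubmxK -[rsubmx (rsubmx v)]hsubmxK in v0 vA0.
move: (lsubmx v) (lsubmx (rsubmx v)) (lsubmx (rsubmx (rsubmx v)))
  (rsubmx (rsubmx (rsubmx v))) v0 vA0 => a b0 b1 b2 v0.
rewrite !mul_row_col !mul_mx11 mulmx_row_sum => rel0.
have relp := congr1 (fun x => lprod x p) rel0.
have relq := congr1 (fun x => lprod x q) rel0.
move: relp relq; rewrite /= !lprodDl !lprodZl !lprod_suml !lprod0l.
rewrite !big1 => [|i _|i _]; rewrite ?(proj1 (wpq _)) ?(proj2 (wpq _)) ?mulr0 //.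
rewrite yp yq pp qq pq lprodC pq => rp rq.
have b10 : b1 0 0 = 0 by lra.
have b20 : b2 0 0 = 0 by lra.
have b0n0 : b0 0 0 != 0.
  apply: contraNneq v0 => b00.
  rewrite b00 b10 b20 !scale0r !addr0 in rel0.
  have a0 : a = 0 by apply/rowP => i; rewrite mxE (w_indep _ rel0).
  have mx11_eq0 (b : 'M[R]_1) : b 0 0 = 0 -> b = 0.
    by move=> b_0; apply/matrixP => i j; rewrite !ord1 mxE.
  by rewrite a0 (mx11_eq0 _ b00) (mx11_eq0 _ b10) (mx11_eq0 _ b20) !row_mx0.
exists (fun i => - (b0 0 0)^-1 * a 0 i); apply: (scalerI b0n0).
rewrite scaler_sumr (eq_bigr (fun i => - (a 0 i *: w i))); last first.
  by move=> i _; rewrite scalerA mulrA mulrN divff // mulN1r scaleNr.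
rewrite sumrN; apply/eqP; rewrite -addr_eq0 addrC; apply/eqP.
by rewrite b10 b20 !scale0r !addr0 in rel0.
Qed.

Section DirectionalDerivatives.
Variable R : realType.

Lemma derive_lincomb (V W : normedModType R) (f : V -> W) x m (c : 'I_m -> R)
    (v : 'I_m -> V) :
  differentiable f x -> 'D_(\sum_k c k *: v k) f x = \sum_k c k *: 'D_(v k) f x.
Proof.
move=> df; rewrite deriveE // linear_sum; apply: eq_bigr => k _.
by rewrite linearZ /= deriveE.
Qed.

Lemma deriveB_dir (V W : normedModType R) (f : V -> W) x v v' :
  differentiable f x -> 'D_(v - v') f x = 'D_v f x - 'D_v' f x.
Proof. by move=> df; rewrite !deriveE // linearB. Qed.

Lemma derivable1_comp (V W : normedModType R) (f : R -> V) (g : V -> W) t :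
  derivable f t 1 -> differentiable g (f t) -> derivable (g \o f) t 1.
Proof.
by move=> /derivable1_diffP df dg; apply/derivable1_diffP/differentiable_comp.
Qed.

Lemma derive1_comp_dir (V W : normedModType R) (f : R -> V) (g : V -> W) t :
  derivable f t 1 -> differentiable g (f t) ->
  'D_1 (g \o f) t = 'D_('D_1 f t) g (f t).
Proof.
move=> /derivable1_diffP df dg.
rewrite deriveE; last exact: differentiable_comp.
by rewrite diff_comp //= -!deriveE.
Qed.

Variable n : nat.

Lemma derivable1_coord (f : R -> 'rV[R]_n.+1) t i :
  derivable f t 1 -> derivable (fun s => f s 0 i) t 1.
Proof. by move=> /derivable_mxP; apply. Qed.

Lemma derive1_coord (f : R -> 'rV[R]_n.+1) t i :
  derivable f t 1 -> 'D_1 (fun s => f s 0 i) t = 'D_1 f t 0 i.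
Proof. by move=> df; rewrite (derive_mx df) mxE. Qed.

Lemma derive1_lprod (f g : R -> 'rV[R]_n.+1) t :
  derivable f t 1 -> derivable g t 1 ->
  'D_1 (fun s => lprod (f s) (g s)) t =
    lprod ('D_1 f t) (g t) + lprod (f t) ('D_1 g t).
Proof.
move=> df dg; pose sgn (i : 'I_n.+1) : R := if i == ord0 then -1 else 1.
have dterm i : derivable (fun s => sgn i * f s 0 i) t 1.
  by apply: derivableM; [exact: derivable_cst | exact: derivable1_coord].
have -> : (fun s => lprod (f s) (g s)) =
    \sum_(i < n.+1) (fun s => sgn i * f s 0 i * g s 0 i) by rewrite fct_sumE.
rewrite derive_sum => [|i]; last by apply: derivableM; [exact: dterm | exact: derivable1_coord].
rewrite /lprod -big_split /=; apply: eq_bigr => i _.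
rewrite deriveM ?deriveM ?derive_cst ?derive1_coord //; try exact: derivable1_coord.
by rewrite /GRing.scale /sgn /=; ring.
Qed.

Lemma derive1_lprod_near0 (f g : R -> 'rV[R]_n.+1) t :
  derivable f t 1 -> derivable g t 1 ->
  (\forall s \near t, lprod (f s) (g s) = 0) ->
  lprod ('D_1 f t) (g t) + lprod (f t) ('D_1 g t) = 0.
Proof.
move=> df dg fg0; rewrite -derive1_lprod //.
by rewrite (near_eq_derive _ fg0) derive_cst.
Qed.

Lemma derive1_tildev (y : R -> 'rV[R]_n.+1) t : derivable y t 1 -> y t 0 0 != 0 ->
  'D_1 (fun s => tildev (y s)) t =
    (y t 0 0)^-1 *: 'D_1 y t + (- (y t 0 0)^-2 * 'D_1 y t 0 0) *: y t.
Proof.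
move=> dy yt0.
have dV : derivable (fun s => (y s 0 0)^-1) t 1 :=
  derivableV yt0 (derivable1_coord (i := 0) dy).
have coordE j : (fun s => tildev (y s) 0 j) = (fun s => (y s 0 0)^-1) * (fun s => y s 0 j).
  by apply/funext => s; rewrite /tildev !mxE.
have dt : derivable (fun s => tildev (y s)) t 1.
  apply/derivable_mxP => i j; rewrite (ord1 i) coordE.
  exact: (derivableM dV (derivable1_coord (i := j) dy)).
rewrite (derive_mx dt); apply/rowP => j; rewrite !mxE coordE.
rewrite (deriveM dV (derivable1_coord (i := j) dy)) (deriveV yt0 (derivable1_coord (i := 0) dy)).
by rewrite !derive1_coord // /GRing.scale /=; ring.
Qed.

Lemma derive1_tildev_lightlike (y : R -> 'rV[R]_n.+1) t :
  derivable y t 1 -> y t 0 0 != 0 -> (\forall s \near t, lprod (y s) (y s) = 0) ->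
  lprod ('D_1 (fun s => tildev (y s)) t) (y t) = 0.
Proof.
move=> dy yt0 yy0.
have yyt : lprod (y t) (y t) = 0 := nbhs_singleton yy0.
have := derive1_lprod_near0 dy dy yy0; rewrite (lprodC (y t)) => y'y.
have y'y0 : lprod ('D_1 y t) (y t) = 0 by lra.
by rewrite derive1_tildev // lprodDl !lprodZl yyt y'y0 !mulr0 addr0.
Qed.

End DirectionalDerivatives.

Section NormalBundleAtPoint.
Variables (R : realType) (s n : nat) (U : set 'rV[R]_s).
Variables (X nT : 'rV[R]_s -> 'rV[R]_n.+1) (u : 'rV[R]_s) (xi : 'rV[R]_n.+1).
Hypotheses (hX : spacelike_embedding U X) (hN : future_unit_timelike_normal U X nT).
Hypotheses (Uu : U u) (xiN1 : inN1 X nT u xi).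

Lemma X_differentiable x : U x -> differentiable X x.
Proof. by case: hX => smX _ _ _ _ Ux; exact: (smX [::] x Ux). Qed.

Lemma DX_differentiable v x : U x -> differentiable (fun y => 'D_v X y) x.
Proof. by case: hX => smX _ _ _ _ Ux; exact: (smX [:: v] x Ux). Qed.

Lemma nT_differentiable x : U x -> differentiable nT x.
Proof. by case: hN => smN _ _ _ Ux; exact: (smN [::] x Ux). Qed.

Let nTnT : lprod (nT u) (nT u) = -1.
Proof. by case: hN => _ _ h _; exact: h. Qed.

Let xixi : lprod xi xi = 1.
Proof. by case: xiN1. Qed.

Let nTxi : lprod (nT u) xi = 0.
Proof. by case: xiN1 => _ _ h; rewrite lprodC. Qed.

Let nT_normal v : lprod (nT u) ('D_v X u) = 0.
Proof. by case: hN => _ h _ _; exact: h. Qed.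

Let xi_normal v : lprod xi ('D_v X u) = 0.
Proof. by case: xiN1 => h _ _; exact: h. Qed.

Local Notation Pi := (Pitau (nT u) xi).

(* The lightcone Gauss image LG(n^T)(p, xi) before projectivization. *)
Definition lgauss := nT u + xi.

Lemma lgauss_lightlike : lprod lgauss lgauss = 0.
Proof. by rewrite /lgauss !lprodDl !lprodDr nTnT xixi nTxi lprodC nTxi; ring. Qed.

Lemma lgauss_time_neq0 : lgauss 0 0 != 0.
Proof.
apply: lightlike_time_neq0; first exact: lgauss_lightlike.
apply/eqP => /eqP; rewrite addr_eq0 => /eqP xiE.
by move: nTnT; rewrite xiE lprodNl lprodNr opprK xixi; lra.
Qed.

(* [weingarten v e]: dX(e) is the tangential part of the derivative of xi in
   the direction v (Weingarten equation for the shape operator along xi). *)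
Definition weingarten v e := forall v',
  lprod ('D_e X u) ('D_v' X u) = - lprod xi ('D_v (fun x => 'D_v' X x) u).

Definition N1_curve (a : R -> 'rV[R]_s) (z : R -> 'rV[R]_n.+1) :=
  [/\ a 0 = u, z 0 = xi, (\forall t \near 0, U (a t) /\ inN1 X nT (a t) (z t)),
      derivable a 0 1 & derivable z 0 1].

Lemma N1_curve_weingarten a z : N1_curve a z -> forall v',
  lprod ('D_1 z 0) ('D_v' X u) = - lprod xi ('D_('D_1 a 0) (fun x => 'D_v' X x) u).
Proof.
case=> a0 z0 near_N1 da dz v'.
have dDX : differentiable (fun x => 'D_v' X x) (a 0).
  by rewrite a0; exact: DX_differentiable.
have zDX0 : \forall t \near 0, lprod (z t) (((fun x => 'D_v' X x) \o a) t) = 0.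
  by apply: filterS near_N1 => t [_ [zN _ _]]; exact: zN.
have := derive1_lprod_near0 dz (derivable1_comp da dDX) zDX0.
by rewrite (derive1_comp_dir da dDX) z0 /= a0 => /eqP; rewrite addr_eq0 => /eqP.
Qed.

Lemma N1_curve_lift a z : N1_curve a z ->
  [/\ derivable (fun t : R => nT (a t) + z t) 0 1, nT (a 0) + z 0 = lgauss,
      'D_1 (fun t : R => nT (a t) + z t) 0 = 'D_('D_1 a 0) nT u + 'D_1 z 0
    & \forall t \near 0, lprod (nT (a t) + z t) (nT (a t) + z t) = 0].
Proof.
case=> a0 z0 near_N1 da dz.
have dnT : differentiable nT (a 0) by rewrite a0; exact: nT_differentiable.
have yE : (fun t => nT (a t) + z t) = (nT \o a) + z by [].
split; first by rewrite yE; exact: derivableD (derivable1_comp da dnT) dz.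
- by rewrite a0 z0.
- by rewrite yE deriveD ?(derive1_comp_dir da dnT) ?a0 //; exact: derivable1_comp.
apply: filterS near_N1 => t [Ut [_ zz znT]]; case: hN => _ _ nn _.
by rewrite !lprodDl !lprodDr (nn _ Ut) zz znT lprodC znT; ring.
Qed.

Lemma tanrel_lgauss_orth w L : tanrel U X nT u xi w L -> lprod L lgauss = 0.
Proof.
case=> a [z [eta [ac [_ _ _ ->]]]]; have [dy y0 _ yy0] := N1_curve_lift ac.
rewrite -y0; apply: (derive1_tildev_lightlike (y := fun t => nT (a t) + z t)) => //=.
by rewrite y0; exact: lgauss_time_neq0.
Qed.

Lemma tanrel_decomp w L : tanrel U X nT u xi w L -> exists v eta e,
  [/\ w = 'D_v X u + eta, inW X nT u xi eta, weingarten v e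
    & Pi L = (lgauss 0 0)^-1 *: (Pi ('D_v nT u) + 'D_e X u + eta)].
Proof.
case=> a [z [eta [ac [etaW [e [al [be z'E]]] -> ->]]]].
have [dy y0 y'E _] := N1_curve_lift ac; have [a0 _ _ da _] := ac.
have [etaN etaxi etanT] := etaW.
have {}z'E : 'D_1 z 0 = 'D_e X u + eta + al *: nT u + be *: xi.
  rewrite -[LHS](subrK eta) z'E -!addrA; congr (_ + _).
  by rewrite addrA [RHS]addrC.
exists ('D_1 a 0), eta, e; split => //.
- by rewrite (derive1_comp_dir da) ?a0 //; exact: X_differentiable.
- move=> v'; rewrite -(N1_curve_weingarten ac) z'E !lprodDl !lprodZl.
  by rewrite nT_normal xi_normal etaN !mulr0 !addr0.
rewrite (derive1_tildev dy); last by rewrite y0; exact: lgauss_time_neq0.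
rewrite y0 y'E z'E (Pitau_frame_comb nTnT xixi nTxi); first by rewrite addrA.
- by rewrite lprodDl etanT lprodC nT_normal addr0.
by rewrite lprodDl etaxi lprodC xi_normal addr0.
Qed.

Lemma tangent_normal_eq0 d : in_normal X u ('D_d X u) -> d = 0.
Proof.
case: hX => _ _ spacelike _ _ dN; apply/eqP; apply: contraT => d0.
by have := spacelike u d Uu d0; rewrite dN ltxx.
Qed.

Lemma in_normal_lincomb m (c : 'I_m -> R) (eta : 'I_m -> 'rV[R]_n.+1) :
  (forall k, in_normal X u (eta k)) -> in_normal X u (\sum_k c k *: eta k).
Proof. by move=> etaN v; rewrite lprod_suml big1 // => k _; rewrite etaN mulr0. Qed.

Lemma tangent_normal_unique v eta v' eta' :
  in_normal X u eta -> in_normal X u eta' ->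
  'D_v X u + eta = 'D_v' X u + eta' -> v = v' /\ eta = eta'.
Proof.
move=> etaN eta'N E.
suff vv' : v = v' by split=> //; apply: (addrI ('D_v X u)); rewrite {2}vv'.
apply/eqP; rewrite -subr_eq0; apply/eqP/tangent_normal_eq0 => x.
have := congr1 (fun y => lprod y ('D_x X u)) E; rewrite /= !lprodDl etaN eta'N !addr0.
rewrite deriveB_dir; last exact: X_differentiable.
by rewrite lprodBl => ->; rewrite subrr.
Qed.

Lemma weingarten_lincomb m (c : 'I_m -> R) (v e : 'I_m -> 'rV[R]_s) :
  (forall k, weingarten (v k) (e k)) ->
  weingarten (\sum_k c k *: v k) (\sum_k c k *: e k).
Proof.
move=> we v'; rewrite derive_lincomb; last exact: X_differentiable.
rewrite derive_lincomb; last exact: DX_differentiable.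
rewrite lprod_suml lprod_sumr -sumrN; apply: eq_bigr => k _.
by rewrite we mulrN.
Qed.

Lemma weingarten_unique v e e' : weingarten v e -> weingarten v e' -> e = e'.
Proof.
move=> we we'; apply/eqP; rewrite -subr_eq0; apply/eqP/tangent_normal_eq0 => v'.
rewrite deriveB_dir; last exact: X_differentiable.
by rewrite lprodBl we we' subrr.
Qed.

Lemma Pitau_tanrel_lincomb m (w L : 'I_m -> 'rV[R]_n.+1) (c : 'I_m -> R) w' L' :
  (forall k, tanrel U X nT u xi (w k) (L k)) -> tanrel U X nT u xi w' L' ->
  w' = \sum_k c k *: w k -> Pi L' = \sum_k c k *: Pi (L k).
Proof.
move=> wL w'L' w'E.
have [v /choice [eta /choice [e decomp]]] := choice (fun k => tanrel_decomp (wL k)).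
have [v' [eta' [e' [w'E' [eta'N _ _] we' PL']]]] := tanrel_decomp w'L'.
have [vE etaE] : v' = \sum_k c k *: v k /\ eta' = \sum_k c k *: eta k.
  apply: tangent_normal_unique => //.
    by apply: in_normal_lincomb => k; have [_ []] := decomp k.
  rewrite -w'E' w'E derive_lincomb; last exact: X_differentiable.
  rewrite -big_split /=.
  by apply: eq_bigr => k _; have [-> _ _ _] := decomp k; rewrite scalerDr.
have eE : e' = \sum_k c k *: e k.
  apply: (weingarten_unique we'); rewrite vE.
  by apply: weingarten_lincomb => k; have [_ _ ? _] := decomp k.
rewrite PL' vE etaE eE derive_lincomb; last exact: nT_differentiable.
rewrite derive_lincomb; last exact: X_differentiable.
rewrite Pitau_sum -!big_split scaler_sumr; apply: eq_bigr => k _ /=.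
by have [_ _ _ ->] := decomp k; rewrite [RHS]scalerA mulrC -scalerA !scalerDr.
Qed.

Lemma tanrel0 : tanrel U X nT u xi 0 0.
Proof.
exists (fun _ => u), (fun _ => xi), 0; split; first by split => //; apply: filterE.
split.
- by split; rewrite ?lprod0l // => v; rewrite lprod0l.
- by exists 0, 0, 0; rewrite derive_cst subr0 !scale0r !addr0 derive0.
- by rewrite [X \o _](_ : _ = cst (X u)) // derive_cst addr0.
- by rewrite derive_cst.
Qed.

Lemma tanrel_frame_orth w L : tanrel U X nT u xi w L ->
  lprod w (nT u) = 0 /\ lprod w xi = 0.
Proof.
move=> /tanrel_decomp [v [eta [e [-> [_ etaxi etanT] _ _]]]].
by rewrite !lprodDl etanT etaxi lprodC nT_normal lprodC xi_normal !addr0.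
Qed.

Lemma gram_tanrel_Pitau m (w L : 'I_m -> 'rV[R]_n.+1) :
  (forall i, tanrel U X nT u xi (w i) (L i)) ->
  gram L = gram (fun i => - Pi (L i)).
Proof.
move=> wL; rewrite gramN; apply/matrixP => i j; rewrite !mxE.
by rewrite Pitau_isometry // -/lgauss; apply: tanrel_lgauss_orth.
Qed.

Lemma sqrt_det_gram_basis m (w L b Lb : 'I_m -> 'rV[R]_n.+1) (A : 'M[R]_m) :
  (forall i, tanrel U X nT u xi (w i) (L i)) ->
  (forall i, tanrel U X nT u xi (b i) (Lb i)) ->
  (forall w L, tanrel U X nT u xi w L -> exists c : 'I_m -> R, w = \sum_i c i *: b i) ->
  (forall i, - Pi (Lb i) = \sum_j A i j *: b j) ->
  Num.sqrt (\det (gram L)) = `|\det A| * Num.sqrt (\det (gram w)).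
Proof.
move=> wL bL b_span AE; have [C wE] := choice (fun i => b_span _ _ (wL i)).
pose CM := \matrix_(i, k) C i k.
have PiLE i : - Pi (L i) = \sum_j (CM *m A) i j *: b j.
  rewrite (Pitau_tanrel_lincomb bL (wL i) (wE i)) -sumrN.
  under eq_bigr do rewrite -scalerN AE scaler_sumr.
  rewrite exchange_big /=; apply: eq_bigr => j _.
  by rewrite !mxE scaler_suml; apply: eq_bigr => k _; rewrite mxE scalerA.
have gramL : gram L = CM *m A *m gram b *m (CM *m A)^T.
  by rewrite (gram_tanrel_Pitau wL); apply: gram_lincomb.
have gramw : gram w = CM *m gram b *m CM^T.
  by apply: gram_lincomb => i; rewrite wE; apply: eq_bigr => k _; rewrite mxE.
have -> : \det (gram L) = \det A ^+ 2 * \det (gram w).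
  by rewrite gramL gramw !det_mulmx !det_tr !det_mulmx; ring.
by rewrite sqrtrM ?sqr_ge0 // sqrtr_sqr.
Qed.

(* When no basis satisfies the conditions in [Kl], [xget] returns 0; then w
   cannot be independent (it would be such a basis), and a dependence among the
   w i is transported to the Pi (L i), so both sides vanish. *)
Lemma sqrt_det_gram_tanrel (w L : 'I_n.-1 -> 'rV[R]_n.+1) :
  (forall i, tanrel U X nT u xi (w i) (L i)) ->
  Num.sqrt (\det (gram L)) = `|Kl U X nT u xi| * Num.sqrt (\det (gram w)).
Proof.
move=> wL; rewrite /Kl; case: xgetP => [k _ [b [Lb [A [bL _ b_span AE ->]]]]|noKl].
  exact: sqrt_det_gram_basis wL bL b_span AE.
rewrite normr0 mul0r.
have w_orth i := tanrel_frame_orth (wL i).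
have frame_span := frame_orth_span nTnT xixi nTxi w_orth.
have [w_indep|] := pselect (lin_indep w).
  have PiL_span i : exists c : 'I_n.-1 -> R, - Pi (L i) = \sum_j c j *: w j.
    have [PiLnT PiLxi] := Pitau_frame_orth nTnT xixi nTxi (L i).
    by apply: frame_span; rewrite // lprodNl ?PiLnT ?PiLxi oppr0.
  have [A AE] := choice PiL_span.
  case: (noKl (\det (\matrix_(i, j) A i j))); exists w, L, (\matrix_(i, j) A i j).
  split=> // [w' L' /tanrel_frame_orth [] | i]; first exact: frame_span.
  by rewrite AE; apply: eq_bigr => j _; rewrite mxE.
move=> /existsNP [c /not_implyP [cw0 /existsNP [i0 /eqP ci0]]].
have := Pitau_tanrel_lincomb wL tanrel0 (esym cw0); rewrite linear0 => PiL0.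
by rewrite (gram_tanrel_Pitau wL) gramN (det_gram_eq0 ci0 (esym PiL0)) sqrtr0.
Qed.

End NormalBundleAtPoint.

Theorem theorem6p1 (R : realType) (s n : nat) (U : set 'rV[R]_s)
  (X nT : 'rV[R]_s -> 'rV[R]_n.+1) :
  open U -> spacelike_embedding U X -> future_unit_timelike_normal U X nT ->
  forall (u : 'rV[R]_s) (xi : 'rV[R]_n.+1), U u -> inN1 X nT u xi ->
  forall (w L : 'I_n.-1 -> 'rV[R]_n.+1),
    (forall i, tanrel U X nT u xi (w i) (L i)) ->
    Num.sqrt (\det (gram L)) = `|Kl U X nT u xi| * Num.sqrt (\det (gram w)).
Proof.
move=> _ hX hN u xi Uu xiN1 w L wL.
exact: (sqrt_det_gram_tanrel hX hN Uu xiN1 wL).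
Qed.
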